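(* Let $G=(V,E)$ be a simple undirected graph and let $i\in V$ have degree $\delta$. Assume that no two nodes of $N(i)$ are adjacent (equivalently in the paper's terms, $f_2(S^i,k)=0$ for all $k\in N(i)$). Consider the greedy procedure that starts with $S=\{i\}$ and repeatedly adds to $S$ a node $k\in N(i)\setminus S$ maximizing $f_1(S,k)$ among those with $f_1(S,k)>0$, until no such node exists. Then this procedure has approximation ratio $O(\ln\delta)$ with respect to the star degree centrality $\mathcal{C}^s(i)$, i.e., $\mathcal{C}^s(i)/|N(S)|=O(\ln\delta)$ for the returned $S$.
   Context: For $S\subseteq V$, $N(S)=\{j\in V\setminus S : (a,j)\in E \text{ for some } a\in S\}$. A set $S$ forms an induced star if $G[S]$ has exactly one node of degree $|S|-1$ and $|S|-1$ nodes of degree $1$. $\mathcal{C}^s(i)=\max\{|N(S)| : S \text{ forms an induced star centered at } i\}$. For an induced star $S^i$ centered at $i$ and a node $k$: $f_1(S,k)=|N(S\cup\{k\})|-|N(S)|$ and $f_2(S^i,k)=\sum_{j:(i,j)\in E,(k,j)\in E}|N(S^i\cup\{j\})\setminus N(S^i)|$. *)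

From Stdlib Require Import Reals.
From mathcomp Require Import all_boot all_order all_algebra.
Set Implicit Arguments. Unset Strict Implicit. Unset Printing Implicit Defensive.

Section Graph.
Variables (T : finType) (e : rel T).

Definition nbhd (S : {set T}) : {set T} :=
  [set j | (j \notin S) && [exists a in S, e a j]].

Definition deg_in (S : {set T}) (x : T) : nat := #|[set y in S | e x y]|.

Definition deg (i : T) : nat := #|[set j | e i j]|.

Definition induced_star (i : T) (S : {set T}) : bool :=
  [&& i \in S, deg_in S i == #|S| - 1 &
      [forall x in S, (x != i) ==> (deg_in S x == 1)]].

Definition star_centrality (i : T) : nat :=
  \max_(S : {set T} | induced_star i S) #|nbhd S|.

Definition f1 (S : {set T}) (k : T) : int :=
  (#|nbhd (k |: S)|%:Z - #|nbhd S|%:Z)%R.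

Definition greedy_step (i : T) (S S' : {set T}) : Prop :=
  exists k, [/\ e i k, k \notin S, (0 < f1 S k)%R,
    (forall k', e i k' -> k' \notin S -> (0 < f1 S k')%R -> (f1 S k' <= f1 S k)%R)
    & S' = k |: S].

(* sets reachable from {i} by greedy steps (any tie-breaking) *)
Inductive greedy_reach (i : T) : {set T} -> Prop :=
| greedy_start : greedy_reach i [set i]
| greedy_next S S' : greedy_reach i S -> greedy_step i S S' -> greedy_reach i S'.

Definition greedy_output (i : T) (S : {set T}) : Prop :=
  greedy_reach i S /\
  (forall k, e i k -> k \notin S -> ~ (0 < f1 S k)%R).

End Graph.

From Stdlib Require Import Reals Lra.
From mathcomp Require Import all_boot all_order all_algebra zify.

Set Implicit Arguments.
Unset Strict Implicit.
Unset Printing Implicit Defensive.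

(** The greedy set is in fact a 2-approximation.
    For [i ∈ S ⊆ {i} ∪ N(i)], [N(S)] consists of the [δ - |S \ {i}|]
    neighbours of [i] outside [S] together with the set [F(S) = far_nbhd S] of
    nodes at distance two from [i] adjacent to [S]. A greedy step increases [|N(S)|], so
    [F(S)] gains at least two nodes; hence [2 |S \ {i}| <= |F(S)|] along the run.
    When the procedure stops, adding a neighbour of [i] to [S] adds at most one
    node to [F(S)], so any star [S'] centred at [i] has
    [|F(S')| <= |F(S)| + |S' \ {i}|] and therefore
    [|N(S')| <= δ + |F(S)| <= 2 |N(S)|]. *)

Lemma leq_card_bigcup (I T : finType) (A : {pred I}) (F : I -> {set T}) :
  #|\bigcup_(k in A) F k| <= \sum_(k in A) #|F k|.
Proof.
elim/big_rec2: _ => [|k n B _ IH]; first by rewrite cards0.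
by rewrite (leq_trans (leq_card_setU _ _)) ?leq_add2l.
Qed.

Lemma f1_gt0 (T : finType) (e : rel T) (S : {set T}) (k : T) :
  (0 < f1 e S k)%R = (#|nbhd e S| < #|nbhd e (k |: S)|).
Proof. by rewrite /f1 Num.Theory.subr_gt0 ltz_nat. Qed.

Section GreedyStar.
Variables (T : finType) (e : rel T).
Hypothesis e_irr : irreflexive e.
Variable i : T.

Local Notation Ni := [set j | e i j].

Definition far_nbhd (S : {set T}) : {set T} :=
  [set j | [&& j \notin Ni, j != i & [exists a in S, e a j]]].

Definition star_shaped (S : {set T}) : bool := (i \in S) && (S \subset i |: Ni).

Lemma neq_nbr k : e i k -> k != i.
Proof. by apply: contraTneq => ->; rewrite e_irr. Qed.

Lemma star_shaped_set1 : star_shaped [set i].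
Proof. by rewrite /star_shaped set11 sub1set setU11. Qed.

Lemma star_shapedU1 (S : {set T}) k : e i k -> star_shaped S -> star_shaped (k |: S).
Proof.
move=> eik /andP[iS sSN]; rewrite /star_shaped setU1r //=.
by rewrite subUset sSN sub1set !inE eik orbT.
Qed.

Lemma star_shaped_setD1 (S : {set T}) : star_shaped S -> S :\ i \subset Ni.
Proof.
case/andP=> _ /subsetP sSN; apply/subsetP => x /setD1P[xi /sSN].
by rewrite in_setU1 (negbTE xi).
Qed.

Lemma induced_star_shaped (S : {set T}) : induced_star e i S -> star_shaped S.
Proof.
case/and3P=> iS /eqP degS _; rewrite /star_shaped iS.
have sub : [set y in S | e i y] \subset S :\ i.
  by apply/subsetP => y; rewrite !inE => /andP[-> /neq_nbr ->].
have card_eq : #|[set y in S | e i y]| = #|S :\ i|.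
  by move: degS; rewrite /deg_in (cardsD1 i S) iS add1n subn1 => ->.
apply/subsetP => y yS; rewrite in_setU1; case: eqVneq => //= yi.
have : y \in S :\ i by rewrite !inE yi.
by rewrite -(subset_cardP card_eq sub) !inE => /andP[].
Qed.

Lemma card_setD1_nbrU1 (S : {set T}) k : e i k -> k \notin S ->
  #|(k |: S) :\ i| = #|S :\ i|.+1.
Proof.
move=> /neq_nbr ki kS; rewrite setDUl (setDidPl _) ?disjoints1 ?in_set1 //.
by rewrite cardsU1 in_setD1 (negbTE kS) andbF.
Qed.

Lemma far_nbhdS (A B : {set T}) : A \subset B -> far_nbhd A \subset far_nbhd B.
Proof.
move/subsetP=> sAB; apply/subsetP => j; rewrite !inE.
case/and3P=> -> -> /existsP[a /andP[aA eaj]] /=.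
by apply/existsP; exists a; rewrite sAB.
Qed.

Lemma nbhd_star_shaped (S : {set T}) :
  star_shaped S -> nbhd e S = (Ni :\: S) :|: far_nbhd S.
Proof.
case/andP=> iS /subsetP sSN; apply/setP => j; rewrite !inE.
case eij: (e i j) => /=.
  rewrite andbT; case: (boolP (j \in S)) => //= _.
  by apply/existsP; exists i; rewrite iS.
case: (eqVneq j i) => [->|ji] /=; first by rewrite iS.
have -> // : j \notin S.
by apply/negP => /sSN; rewrite !inE (negbTE ji) eij.
Qed.

Lemma card_nbhd (S : {set T}) :
  star_shaped S -> #|nbhd e S| + #|S :\ i| = deg e i + #|far_nbhd S|.
Proof.
move=> shS; have sSN := star_shaped_setD1 shS.
have disj : (Ni :\: S) :&: far_nbhd S = set0.
  by apply/setP => j; rewrite !inE; case: (e i j); rewrite ?andbF.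
have NiS : Ni :&: S = S :\ i.
  apply/setP => j; rewrite !inE; apply/andP/andP => [[/neq_nbr ji jS]|[ji jS]] //.
  by split=> //; move/subsetP: sSN => /(_ j); rewrite !inE ji jS => ->.
rewrite nbhd_star_shaped // cardsU disj cards0 subn0 -NiS.
by have := cardsID S Ni; rewrite /deg; lia.
Qed.

Lemma card_nbhdU1 (S : {set T}) k : star_shaped S -> e i k -> k \notin S ->
  #|nbhd e (k |: S)| + #|far_nbhd S| + 1 = #|nbhd e S| + #|far_nbhd (k |: S)|.
Proof.
move=> shS eik kS.
have := card_nbhd shS; have := card_nbhd (star_shapedU1 eik shS).
by rewrite card_setD1_nbrU1 //; lia.
Qed.

Lemma greedy_reach_far_nbhd (S : {set T}) :
  greedy_reach e i S -> star_shaped S /\ 2 * #|S :\ i| <= #|far_nbhd S|.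
Proof.
elim=> [|S0 _ _ [shS0 far0] [k [eik kS0 /[!f1_gt0] gain _ ->]]].
  by rewrite star_shaped_set1 setDv cards0.
split; first exact: star_shapedU1.
have := card_nbhdU1 shS0 eik kS0.
by rewrite card_setD1_nbrU1 //; lia.
Qed.

Lemma far_nbhd_gain_le1 (S : {set T}) k : greedy_output e i S -> e i k ->
  #|far_nbhd (k |: S) :\: far_nbhd S| <= 1.
Proof.
case=> /greedy_reach_far_nbhd[shS _] stop eik.
rewrite cardsDS ?far_nbhdS ?subsetUr //.
case: (boolP (k \in S)) => kS.
  by rewrite (setUidPr _) ?subnn ?sub1set.
move/negP: (stop k eik kS); rewrite f1_gt0 -leqNgt.
by have := card_nbhdU1 shS eik kS; lia.
Qed.

Lemma far_nbhd_sub_cover (S S' : {set T}) : far_nbhd S' \subset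
  far_nbhd S :|: \bigcup_(k in S' :\ i) (far_nbhd (k |: S) :\: far_nbhd S).
Proof.
apply/subsetP => j; rewrite inE => /and3P[jN ji /existsP[a /andP[aS' eaj]]].
rewrite in_setU; case: (boolP (j \in far_nbhd S)) => //= jS.
apply/bigcupP; exists a.
  by rewrite in_setD1 aS' andbT; apply: contraNneq jN => <-; rewrite inE.
rewrite in_setD jS inE jN ji /=; apply/existsP; exists a.
by rewrite setU11.
Qed.

Lemma card_far_nbhd_star_shaped (S S' : {set T}) :
  greedy_output e i S -> star_shaped S' ->
  #|far_nbhd S'| <= #|far_nbhd S| + #|S' :\ i|.
Proof.
move=> outS shS'.
rewrite (leq_trans (subset_leq_card (far_nbhd_sub_cover S S'))) //.
rewrite (leq_trans (leq_card_setU _ _)) // leq_add2l.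
rewrite (leq_trans (leq_card_bigcup _ _)) // -sum1_card leq_sum // => k kS'.
apply: far_nbhd_gain_le1 => //.
by have := subsetP (star_shaped_setD1 shS') k kS'; rewrite inE.
Qed.

Lemma card_nbhd_induced_star (S S' : {set T}) :
  greedy_output e i S -> induced_star e i S' -> #|nbhd e S'| <= 2 * #|nbhd e S|.
Proof.
move=> outS /induced_star_shaped shS'.
have [shS farS] := greedy_reach_far_nbhd outS.1.
have := card_nbhd shS; have := card_nbhd shS'.
by have := card_far_nbhd_star_shaped outS shS'; lia.
Qed.

Lemma star_centrality_le_greedy (S : {set T}) :
  greedy_output e i S -> star_centrality e i <= 2 * #|nbhd e S|.
Proof. by move=> outS; apply/bigmax_leqP => S'; apply: card_nbhd_induced_star. Qed.

End GreedyStar.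

Local Open Scope R_scope.

(* Stdlib's [ln] is [0] on nonpositive reals, so the case [n = 0] holds too. *)
Lemma ln_INR_ge0 n : 0 <= ln (INR n).
Proof.
case: n => [|n]; first by rewrite /INR /ln; case: Rlt_dec => h; [exfalso; lra | lra].
have n1 : 1 <= INR n.+1 by rewrite S_INR; have := pos_INR n; lra.
rewrite -ln_1; case: (Rle_lt_or_eq_dec _ _ n1) => [lt1|<-]; last lra.
by left; apply: ln_increasing; lra.
Qed.

Theorem lemma1 :
  exists c : R, 0 < c /\
  forall (T : finType) (e : rel T), symmetric e -> irreflexive e ->
  forall i : T,
    (forall j k, e i j -> e i k -> ~~ e j k) ->
    forall S : {set T}, greedy_output e i S ->
    INR (star_centrality e i)
       <= c * (1 + ln (INR (deg e i))) * INR #|nbhd e S|.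
Proof.
exists 2; split; first lra.
move=> T e _ e_irr i _ S outS.
have := le_INR _ _ (elimT leP (star_centrality_le_greedy e_irr outS)).
rewrite mult_INR /=.
have := ln_INR_ge0 (deg e i); have := pos_INR #|nbhd e S|; nra.
Qed.
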